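(* Let $n\ge2$ and $W_n=(w_{ij},\ 1\le j<i\le n)$ be a triangular array of positive reals. Then $T_n=T^\triangle_n(W_n)$ satisfies $$\mathcal{E}^\triangle(T_n)=\sum_{1\le j<i\le n}\frac1{w_{ij}}.$$
   Context: Triangular arrays are $X=(x_{ij},\ 1\le j<i\le n)$ of positive reals. Local maps (same formulas as for matrices): for $i\ge3$, $l_{i1}$ replaces $x_{i1}$ by $x_{i-1,1}x_{i1}$; for $2\le j$ with $j+1<i$, $l_{ij}$ replaces $(x_{i-1,j-1},x_{i-1,j},x_{i,j-1},x_{ij})=(a,b,c,d)$ by $(bc/(ab+ac),b,c,d(b+c))$, other entries unchanged. For $1\le j\le n-2$ let $\rho^n_j=l_{n-j+1,1}\circ l_{n-j+2,2}\circ\cdots\circ l_{n-1,j-1}\circ l_{nj}$, and set $\rho^{\triangle,n}_j=\rho^n_j$. Let $r^\triangle_{n,n-1}$ replace $x_{n,n-1}$ by $1/x_{n,n-1}$. With conventions $x_{i0}=1$ and $x_{n+1,n-1}=1$: for $k=0,1,\dots,\lfloor n/2\rfloor-1$, $b^{\triangle,n}_{n-2k,n-2k-1}$ replaces $x_{n-2k,n-2k-1}$ by $x_{n-2k+1,n-2k-1}x_{n-2k,n-2k-2}/x_{n-2k,n-2k-1}$; for $k=1,\dots,\lfloor (n-1)/2\rfloor$, $b^{\triangle,n}_{n-2k+1,n-2k}$ is the identity. Set $\rho^{\triangle,n}_{n-1}=b^{\triangle,n}_{2,1}\circ\cdots\circ b^{\triangle,n}_{n-1,n-2}\circ b^{\triangle,n}_{n,n-1}\circ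 r^\triangle_{n,n-1}$ and $R^\triangle_n=\rho^{\triangle,n}_{n-1}\circ\cdots\circ\rho^{\triangle,n}_1$. Define $T^\triangle_2(x_{21})=x_{21}$ and for $n\ge3$, $T^\triangle_n(X_n)=R^\triangle_n\begin{pmatrix}T^\triangle_{n-1}(X_{n-1})\\ x_{n1}\ \cdots\ x_{n,n-1}\end{pmatrix}$, where $X_{n-1}=(x_{ij},\ 1\le j<i\le n-1)$ and the last row $(x_{n1},\dots,x_{n,n-1})$ is appended. For a triangular array, $\mathcal{E}^\triangle(X)=\frac1{x_{21}}+\sum_{1\le j<i\le n}\frac{x_{i-1,j}+x_{i,j-1}}{x_{ij}}$ with $x_{i0}=x_{ii}=0$ in this sum. *)

(* Triangular arrays are represented as total functions
   X : nat -> nat -> R, of which only the entries X i j with 1 <= j < i <= n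
   are meaningful (1-based indices as in the paper). *)
From mathcomp Require Import all_boot all_order all_algebra.
From mathcomp Require Import reals.
Set Implicit Arguments. Unset Strict Implicit. Unset Printing Implicit Defensive.
Import Order.TTheory GRing.Theory Num.Theory.
Local Open Scope ring_scope.

Section Tri.
Variable R : realFieldType.
Definition tarray := nat -> nat -> R.

Definition upd (x : tarray) (i j : nat) (v : R) : tarray :=
  fun a b => if (a == i) && (b == j) then v else x a b.

Definition lmap (i j : nat) (x : tarray) : tarray :=
  if j == 1%N then upd x i 1 (x i.-1 1%N * x i 1%N)
  else
    let a := x i.-1 j.-1 in let b := x i.-1 j in
    let c := x i j.-1 in let d := x i j in
    upd (upd x i.-1 j.-1 (b * c / (a * b + a * c))) i j (d * (b + c)).

(* rho^n_j = l_{n-j+1,1} o l_{n-j+2,2} o ... o l_{nj}  (l_{nj} applied first) *)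
Definition rho (n j : nat) (x : tarray) : tarray :=
  foldr (fun k acc => lmap (n - j + k) k acc) x (iota 1 j).

Definition rmap (n : nat) (x : tarray) : tarray :=
  upd x n n.-1 (1 / x n n.-1).

(* b^{triangle,n}_{i,i-1}, with conventions x_{i0} = 1 and x_{n+1,n-1} = 1;
   nontrivial exactly for i = n - 2k (i.e. i of the parity of n, 2 <= i <= n),
   identity otherwise. *)
Definition bmap (n i : nat) (x : tarray) : tarray :=
  if [&& odd i == odd n, (2 <= i)%N & (i <= n)%N] then
    let top := if i == n then 1 else x i.+1 i.-1 in
    let left := if i == 2%N then 1 else x i i.-2 in
    upd x i i.-1 (top * left / x i i.-1)
  else x.

(* rho^{triangle,n}_{n-1} = b_{2,1} o ... o b_{n,n-1} o r_{n,n-1} *)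
Definition rho_last (n : nat) (x : tarray) : tarray :=
  foldr (fun i acc => bmap n i acc) (rmap n x) (iota 2 n.-1).

Definition rhoT (n j : nat) (x : tarray) : tarray :=
  if j == n.-1 then rho_last n x else rho n j x.

Definition Rtri (n : nat) (x : tarray) : tarray :=
  foldl (fun acc j => rhoT n j acc) x (iota 1 n.-1).

Fixpoint Ttri (n : nat) (x : tarray) : tarray :=
  match n with
  | 0 | 1 | 2 => x
  | m.+1 => Rtri n (fun i j => if i == n then x i j else Ttri m x i j)
  end.

(* energy E^triangle, with x_{i0} = x_{ii} = 0 in the sum *)
Definition energy (n : nat) (x : tarray) : R :=
  1 / x 2%N 1%N +
  \sum_(2 <= i < n.+1) \sum_(1 <= j < i)
     ((if j == i.-1 then 0 else x i.-1 j) + (if j == 1%N then 0 else x i j.-1)) / x i j.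
End Tri.

(* Write N_ij(x) = x_{i-1,j} + x_{i,j-1} (with the conventions of the energy,
   plus 1 at (2,1)), so that E(x) = sum N_ij / x_ij.  Induct on n: append the
   row w_n to T_{n-1} and follow the mixed energy in which the entries of row n
   not yet processed by R_n contribute 1/x_nj; it starts at
   E(T_{n-1}) + sum_j 1/w_nj, is invariant under every step of R_n, and ends at
   E(T_n).  In rho_k, l_{nk} multiplies x_nk by N_nk, which turns 1/x_nk into
   N_nk/x'_nk.  Every further l_ij multiplies d = x_ij by b + c = N_ij and
   replaces a by bc/(a(b+c)); the next local map multiplies this new a by its
   own N, so a becomes a' = bcN/(a(b+c)), and N/a' + a'/b + a'/c =
   N/a + a/b + a/c leaves the energy unchanged.  In rho_{n-1}, r and b_{n,n-1}
   together multiply x_{n,n-1} by N = x_{n,n-2}, and every other b_{i,i-1}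
   replaces a by tN/a (t = x_{i+1,i-1}), which swaps the contributions N/a and
   a/t. *)

From mathcomp Require Import all_boot all_order all_algebra.
From mathcomp Require Import reals.
From mathcomp Require Import zify ring.
From Stdlib Require Import FunctionalExtensionality.
Import Order.TTheory GRing.Theory Num.Theory.
Set Implicit Arguments. Unset Strict Implicit. Unset Printing Implicit Defensive.
Local Open Scope ring_scope.

Definition in_tri (n i j : nat) : bool := [&& (1 <= j)%N, (j < i)%N & (i <= n)%N].

Lemma iota_rcons a l : iota a l.+1 = iota a l ++ [:: a + l].
Proof. by rewrite -addn1 iotaD. Qed.

Lemma sum_nat_delta (V : nmodType) (a b i0 : nat) (F : nat -> V) :
  \sum_(a <= i < b) (if i == i0 then F i else 0) = if (a <= i0 < b)%N then F i0 else 0.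
Proof.
case: ifP => hi0; last first.
  by rewrite big1_seq // => i; rewrite mem_index_iota; case: eqP => // -> /andP[_]; rewrite hi0.
rewrite (bigD1_seq i0) ?mem_index_iota ?iota_uniq //= eqxx big1 ?addr0 //.
by move=> i /negbTE ->.
Qed.

Lemma sum_tri_delta (V : nmodType) n i0 j0 (v : V) :
  \sum_(2 <= i < n.+1) \sum_(1 <= j < i) (if (i == i0) && (j == j0) then v else 0)
  = if in_tri n i0 j0 then v else 0.
Proof.
transitivity (\sum_(2 <= i < n.+1)
    (if i == i0 then (if (1 <= j0 < i0)%N then v else 0) else 0)).
  apply: eq_bigr => i _; case: (i =P i0) => [->|_]; last by rewrite big1.
  by rewrite -(sum_nat_delta _ _ _ (fun=> v)).
rewrite sum_nat_delta /in_tri.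
by case: (boolP (2 <= i0 < n.+1)%N); case: (boolP (1 <= j0 < i0)%N);
  case: (boolP [&& _, _ & _]) => // *; exfalso; lia.
Qed.

Section MixedEnergy.
Variable R : realFieldType.
Implicit Types (x y : tarray R) (v : R).

Definition tri_pos n x : Prop :=
  forall i j, (1 <= j)%N -> (j < i)%N -> (i <= n)%N -> 0 < x i j.

(* The extra 1 at (2,1) absorbs the term 1/x_{21} of the energy. *)
Definition nbsum x i j : R :=
  (if j == i.-1 then 0 else x i.-1 j) + (if j == 1%N then 0 else x i j.-1)
  + (if (i == 2%N) && (j == 1%N) then 1 else 0).

Definition scale i j x : tarray R := upd x i j (x i j * nbsum x i j).

(* Entries x_{nj} with j > k of the new row are still unprocessed and
   contribute 1/x_{nj}. *)
Definition mixed_term n k x i j : R :=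
  (if (i == n) && (k < j)%N then 1 else nbsum x i j) / x i j.

Definition mixed_energy n k x : R :=
  \sum_(2 <= i < n.+1) \sum_(1 <= j < i) mixed_term n k x i j.

Lemma energy_mixed n x : (2 <= n)%N -> energy n x = mixed_energy n n.-1 x.
Proof.
move=> hn; rewrite /energy /mixed_energy.
have -> : 1 / x 2%N 1%N = \sum_(2 <= i < n.+1) \sum_(1 <= j < i)
    (if (i == 2%N) && (j == 1%N) then 1 / x 2%N 1%N else 0).
  by rewrite sum_tri_delta /in_tri /= hn.
rewrite -big_split; apply: eq_big_nat => i /andP[_ hi] /=.
rewrite -big_split; apply: eq_big_nat => j /andP[_ hj] /=.
rewrite /mixed_term (_ : (n.-1 < j)%N = false) ?andbF; last by lia.
rewrite /nbsum !mulrDl.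
by case: andP => [[/eqP-> /eqP->]|_]; [rewrite addrC | rewrite mul0r addr0 add0r].
Qed.

Lemma mixed_energy0 n y : (3 <= n)%N ->
  mixed_energy n 0 y = energy n.-1 y + \sum_(1 <= j < n) 1 / y n j.
Proof.
move=> hn; rewrite energy_mixed; last by lia.
rewrite /mixed_energy big_nat_recr /=; last by lia.
rewrite (_ : n.-1.+1 = n); last by lia.
congr (_ + _); last by apply: eq_big_nat => j /andP[hj _]; rewrite /mixed_term eqxx hj.
apply: eq_big_nat => i /andP[_ hi]; apply: eq_big_nat => j /andP[_ hj].
rewrite /mixed_term; have -> : (i == n) = false by lia.
have -> : (n.-1.-1 < j)%N = false by lia.
by rewrite andbF.
Qed.

Lemma upd_same x i j v : upd x i j v i j = v.
Proof. by rewrite /upd !eqxx. Qed.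

Lemma upd_other x i j v a b : (a != i) || (b != j) -> upd x i j v a b = x a b.
Proof. by rewrite /upd; case/orP => /negbTE ->; rewrite ?andbF. Qed.

Lemma upd_upd x i j v v' : upd (upd x i j v) i j v' = upd x i j v'.
Proof.
apply: functional_extensionality => a; apply: functional_extensionality => b.
by rewrite /upd; case: ((a == i) && (b == j)).
Qed.

Lemma nbsum_upd_other x p q v a b :
  (a.-1 != p) || (b != q) -> (a != p) || (b.-1 != q) ->
  nbsum (upd x p q v) a b = nbsum x a b.
Proof. by move=> h1 h2; rewrite /nbsum !upd_other. Qed.

Lemma nbsum_upd_same x p q v :
  (1 <= q)%N -> (q < p)%N -> nbsum (upd x p q v) p q = nbsum x p q.
Proof. by move=> hq hqp; apply: nbsum_upd_other; lia. Qed.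

Lemma nbsum_upd_right x p q v : (1 <= q)%N -> (1 <= p)%N ->
  nbsum (upd x p q v) p q.+1 = nbsum x p q.+1 + (v - x p q).
Proof.
move=> hq hp; rewrite /nbsum (_ : (q.+1 == 1%N) = false) /=; last by lia.
rewrite upd_same upd_other; last by lia.
ring.
Qed.

Lemma nbsum_upd_below x p q v : (q < p)%N ->
  nbsum (upd x p q v) p.+1 q = nbsum x p.+1 q + (v - x p q).
Proof.
move=> hqp; rewrite /nbsum (_ : (q == p.+1.-1) = false) /=; last by lia.
rewrite upd_same (@upd_other _ _ _ _ p.+1); last by lia.
ring.
Qed.

Lemma mixed_term_upd n k x p q v a b :
  (1 <= q)%N -> (q < p)%N -> (p < n)%N -> (q <= k)%N ->
  mixed_term n k (upd x p q v) a b = mixed_term n k x a b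
   + (if (a == p) && (b == q) then nbsum x p q / v - nbsum x p q / x p q else 0)
   + (if (a == p) && (b == q.+1) then (v - x p q) / x p q.+1 else 0)
   + (if (a == p.+1) && (b == q) then (v - x p q) / x p.+1 q else 0).
Proof.
move=> hq hqp hpn hqk; rewrite /mixed_term.
have np := ltn_eqF hpn.
have [/andP[/eqP-> /eqP->]|n1] := boolP ((a == p) && (b == q)).
  rewrite np !eqxx (ltn_eqF (ltnSn q)) (ltn_eqF (ltnSn p)) upd_same nbsum_upd_same //=.
  ring.
have [/andP[/eqP-> /eqP->]|n2] := boolP ((a == p) && (b == q.+1)).
  rewrite np (ltn_eqF (ltnSn p)) upd_other; last by lia.
  rewrite nbsum_upd_right //=; last by lia.
  ring.
have [/andP[/eqP-> /eqP->]|n3] := boolP ((a == p.+1) && (b == q)).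
  rewrite (_ : (p.+1 == n) && (k < q)%N = false) /=; last by lia.
  rewrite upd_other ?nbsum_upd_below //=; last by lia.
  ring.
rewrite !addr0.
by rewrite upd_other ?nbsum_upd_other //; lia.
Qed.

Lemma mixed_energy_upd n k x p q v :
  (1 <= q)%N -> (q < p)%N -> (p < n)%N -> (q <= k)%N ->
  mixed_energy n k (upd x p q v) = mixed_energy n k x
   + (nbsum x p q / v - nbsum x p q / x p q)
   + (if (q.+1 < p)%N then (v - x p q) / x p q.+1 else 0)
   + (v - x p q) / x p.+1 q.
Proof.
move=> hq hqp hpn hqk; rewrite /mixed_energy.
under eq_bigr => a _ do under eq_bigr => b _ do rewrite mixed_term_upd //.
under eq_bigr => a _ do rewrite !big_split /=.
rewrite !big_split /= !sum_tri_delta /in_tri.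
by rewrite hq hqp (ltnW hpn) hpn (leqW hqp) /= andbT.
Qed.

Lemma mixed_energy_scale n k x :
  (1 <= k)%N -> (k < n)%N -> x n k != 0 -> nbsum x n k != 0 ->
  mixed_energy n k (scale n k x) = mixed_energy n k.-1 x.
Proof.
move=> hk hkn hx hN; apply: eq_big_nat => a /andP[_ ha]; apply: eq_big_nat => b _.
rewrite /mixed_term /scale.
have [/andP[/eqP-> /eqP->]|nnk] := boolP ((a == n) && (b == k)).
  have hk1 : (k.-1 < k)%N by lia.
  rewrite eqxx ltnn hk1 /= upd_same nbsum_upd_same //.
  by field; apply/andP.
have [/andP[/eqP-> hb]|nm] := boolP ((a == n) && (k < b)%N).
  by rewrite eqxx (_ : (k.-1 < b)%N) /= ?upd_other //; lia.
rewrite (_ : (a == n) && (k.-1 < b)%N = false) /=; last by lia.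
by rewrite upd_other ?nbsum_upd_other //; lia.
Qed.

Lemma upd_comm x i j i' j' v v' : (i != i') || (j != j') ->
  upd (upd x i j v) i' j' v' = upd (upd x i' j' v') i j v.
Proof.
move=> h; apply: functional_extensionality => a; apply: functional_extensionality => b.
by rewrite /upd; case: ifP => h1; case: ifP => h2 //; exfalso; lia.
Qed.

Lemma tri_pos_upd n x i j v : tri_pos n x -> 0 < v -> tri_pos n (upd x i j v).
Proof. by move=> hx hv a b *; rewrite /upd; case: ifP => // _; apply: hx. Qed.

Lemma nbsum_gt0 n x i j :
  tri_pos n x -> (1 <= j)%N -> (j < i)%N -> (i <= n)%N -> 0 < nbsum x i j.
Proof.
move=> hx hj hji hin; rewrite /nbsum.
case: (j =P i.-1) => [e|ne]; case: (j =P 1%N) => [e1|ne1].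
- have -> : i == 2%N by lia.
  by rewrite !add0r ltr01.
- by rewrite andbF add0r addr0; apply: hx; lia.
- have -> : i == 2%N = false by lia.
  rewrite !addr0; apply: hx; lia.
- rewrite andbF addr0; apply: addr_gt0; apply: hx; lia.
Qed.

Lemma tri_pos_scale n x i j :
  tri_pos n x -> (1 <= j)%N -> (j < i)%N -> (i <= n)%N -> tri_pos n (scale i j x).
Proof.
move=> hx hj hji hin; apply: tri_pos_upd => //.
by apply: mulr_gt0; [exact: hx | exact: nbsum_gt0 hx hj hji hin].
Qed.

Lemma lmap1E x i : (2 < i)%N -> lmap i 1 x = scale i 1 x.
Proof.
move=> hi; rewrite /lmap /scale /nbsum /= (_ : (1 == i.-1) = false); last by lia.
by rewrite (_ : (i == 2%N) = false) ?add0r ?addr0 1?mulrC //; lia.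
Qed.

Lemma lmapSE x p q : (1 <= q)%N -> (q.+1 < p)%N ->
  lmap p.+1 q.+1 x = upd (scale p.+1 q.+1 x) p q
     (x p q.+1 * x p.+1 q / (x p q * x p q.+1 + x p q * x p.+1 q)).
Proof.
move=> hq hqp; rewrite /lmap /scale /nbsum /=.
have -> : (q.+1 == p) = false by lia.
have -> : (q.+1 == 1%N) = false by lia.
rewrite andbF addr0 upd_comm //; lia.
Qed.

Lemma tri_pos_lmapS n x p q : tri_pos n x ->
  (1 <= q)%N -> (q.+1 < p)%N -> (p < n)%N -> tri_pos n (lmap p.+1 q.+1 x).
Proof.
move=> hx hq hqp hpn; rewrite lmapSE //.
apply: tri_pos_upd; first by apply: tri_pos_scale hx _ _ _; lia.
by apply: divr_gt0; [apply: mulr_gt0 | apply: addr_gt0; apply: mulr_gt0]; apply: hx; lia.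
Qed.

(* With a' the new value, N/a' = a/b + a/c and a'/b + a'/c = N/a. *)
Lemma swap_balance (a b c N : R) : 0 < a -> 0 < b -> 0 < c -> 0 < N ->
  N / (b * c / (a * b + a * c) * N) - N / a
  + (b * c / (a * b + a * c) * N - a) / b + (b * c / (a * b + a * c) * N - a) / c = 0.
Proof.
move=> ha hb hc hN.
have hs : a * b + a * c != 0 by apply: lt0r_neq0; apply: addr_gt0; apply: mulr_gt0.
by field; rewrite hs !lt0r_neq0.
Qed.

Lemma mixed_energy_lmapS n k x p q : tri_pos n x ->
  (1 <= q)%N -> (q.+1 < p)%N -> (p < n)%N -> (q <= k)%N ->
  mixed_energy n k (scale p q (lmap p.+1 q.+1 x)) = mixed_energy n k (scale p.+1 q.+1 x).
Proof.
move=> hx hq hqp hpn hqk.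
set W := scale p.+1 q.+1 x.
have eW a b : (a != p.+1) || (b != q.+1) -> W a b = x a b by apply: upd_other.
have eN : nbsum W p q = nbsum x p q by apply: nbsum_upd_other; lia.
rewrite lmapSE // -/W /scale upd_same nbsum_upd_same ?upd_upd //; last by lia.
have hqp' : (q < p)%N by lia.
rewrite mixed_energy_upd // hqp eN !eW; try by lia.
have hN : 0 < nbsum x p q by apply: nbsum_gt0 hx _ _ _; lia.
rewrite -[RHS]addr0 -(swap_balance (hx p q _ _ _) (hx p q.+1 _ _ _) (hx p.+1 q _ _ _) hN);
  try by lia.
ring.
Qed.

Definition diag_chain d x a l : tarray R :=
  foldr (fun m acc => lmap (d + m) m acc) x (iota a l).

Lemma diag_chain_spec n k d x l a :
  (2 <= d)%N -> (d + k <= n)%N -> tri_pos n x -> (1 <= a)%N -> (a + l = k)%N ->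
  tri_pos n (diag_chain d x a.+1 l) /\
  mixed_energy n k (scale (d + a) a (diag_chain d x a.+1 l))
  = mixed_energy n k (scale (d + k) k x).
Proof.
move=> hd hdk hx; elim: l a => [|l IH] a ha hal; first by rewrite addn0 in hal; subst.
have [hy he] := IH a.+1 (ltn0Sn a) (etrans (addSnnS a l) hal).
rewrite /diag_chain /= -/(diag_chain d x a.+2 l) addnS.
split; first by apply: tri_pos_lmapS => //; lia.
by rewrite mixed_energy_lmapS // -?addnS //; lia.
Qed.

Lemma rho_spec n k x : (1 <= k)%N -> (k.+2 <= n)%N -> tri_pos n x ->
  tri_pos n (rho n k x) /\ mixed_energy n k (rho n k x) = mixed_energy n k.-1 x.
Proof.
move=> hk hkn hx.
have [hy he] := @diag_chain_spec n k (n - k) x k.-1 1 ltac:(lia) ltac:(lia) hx (leqnn 1) ltac:(lia).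
have -> : rho n k x = scale (n - k + 1) 1 (diag_chain (n - k) x 2 k.-1).
  rewrite /rho (_ : iota 1 k = 1%N :: iota 2 k.-1) /=; last by case: k hk {hkn hy he}.
  by rewrite lmap1E //; lia.
rewrite (_ : (n - k + k = n)%N) in he; last by lia.
split; first by apply: tri_pos_scale hy _ _ _; lia.
rewrite he mixed_energy_scale ?lt0r_neq0 //; try by lia.
- by apply: hx; lia.
- by apply: nbsum_gt0 hx _ _ _; lia.
Qed.

Lemma diag_swap_balance (a t N : R) : 0 < a -> 0 < t -> 0 < N ->
  N / (t * N / a) - N / a + (t * N / a - a) / t = 0.
Proof. by move=> ha ht hN; field; rewrite !lt0r_neq0. Qed.

Lemma bmap_subdiagE n x i : (2 <= i)%N -> (i < n)%N ->
  bmap n i x = if odd i == odd n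
               then upd x i i.-1 (x i.+1 i.-1 * nbsum x i i.-1 / x i i.-1) else x.
Proof.
move=> hi hin; rewrite /bmap hi (ltnW hin) /= andbT.
have -> : (i == n) = false by lia.
rewrite /nbsum eqxx add0r.
case: (i =P 2%N) => [->|ni] /=; first by rewrite add0r.
have -> : (i.-1 == 1%N) = false by lia.
by rewrite addr0.
Qed.

Lemma bmap_rmapE n x : (3 <= n)%N -> bmap n n (rmap n x) = scale n n.-1 x.
Proof.
move=> hn.
have n2 : (n == 2%N) = false by lia.
have eN : nbsum x n n.-1 = x n n.-2.
  rewrite /nbsum eqxx n2 andFb add0r addr0.
  by have -> : (n.-1 == 1%N) = false by lia.
rewrite /bmap /rmap /scale eqxx leqnn (_ : (2 <= n)%N) /=; last by lia.
rewrite n2 upd_upd upd_same (@upd_other _ n n.-1 _ n n.-2); last by lia.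
by rewrite eN mul1r eqxx mul1r invrK mulrC.
Qed.

Lemma tri_pos_bmap n x i : tri_pos n x -> (2 <= i)%N -> (i < n)%N -> tri_pos n (bmap n i x).
Proof.
move=> hx hi hin; rewrite bmap_subdiagE //; case: ifP => // _.
apply: tri_pos_upd => //; apply: divr_gt0; last by apply: hx; lia.
by apply: mulr_gt0; [apply: hx | apply: nbsum_gt0 hx _ _ _]; lia.
Qed.

Lemma mixed_energy_bmap n k x i : tri_pos n x -> (2 <= i)%N -> (i < n)%N -> (i.-1 <= k)%N ->
  mixed_energy n k (bmap n i x) = mixed_energy n k x.
Proof.
move=> hx hi hin hik; rewrite bmap_subdiagE //; case: ifP => // _.
rewrite mixed_energy_upd //; try by lia.
have -> : (i.-1.+1 < i)%N = false by lia.
have ha : 0 < x i i.-1 by apply: hx; lia.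
have ht : 0 < x i.+1 i.-1 by apply: hx; lia.
have hN : 0 < nbsum x i i.-1 by apply: nbsum_gt0 hx _ _ _; lia.
by rewrite addr0 -addrA (diag_swap_balance ha ht hN) addr0.
Qed.

Lemma foldr_bmap_spec n x s :
  all (fun i => (2 <= i < n)%N) s -> tri_pos n x ->
  tri_pos n (foldr (bmap n) x s) /\
  mixed_energy n n.-1 (foldr (bmap n) x s) = mixed_energy n n.-1 x.
Proof.
elim: s => [//|i s IH] /= /andP[/andP[hi hin] hs] hx.
have [hy he] := IH hs hx.
split; first exact: tri_pos_bmap.
by rewrite mixed_energy_bmap //; lia.
Qed.

Lemma rho_last_spec n x : (3 <= n)%N -> tri_pos n x ->
  tri_pos n (rho_last n x) /\ mixed_energy n n.-1 (rho_last n x) = mixed_energy n n.-2 x.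
Proof.
case: n => [|[|m]] //= hm hx.
have -> : rho_last m.+2 x = foldr (bmap m.+2) (scale m.+2 m.+1 x) (iota 2 m).
  by rewrite /rho_last iota_rcons foldr_cat /= bmap_rmapE.
have hs : all (fun i => (2 <= i < m.+2)%N) (iota 2 m).
  by apply/allP => i; rewrite mem_iota; lia.
have hsc : tri_pos m.+2 (scale m.+2 m.+1 x) by apply: tri_pos_scale hx _ _ _; lia.
have [hy he] := foldr_bmap_spec hs hsc.
split => //; rewrite he mixed_energy_scale ?lt0r_neq0 //; try by lia.
- by apply: hx; lia.
- by apply: nbsum_gt0 hx _ _ _; lia.
Qed.

Lemma foldl_rho_spec n x l : (l.+2 <= n)%N -> tri_pos n x ->
  tri_pos n (foldl (fun acc j => rhoT n j acc) x (iota 1 l)) /\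
  mixed_energy n l (foldl (fun acc j => rhoT n j acc) x (iota 1 l)) = mixed_energy n 0 x.
Proof.
move=> + hx; elim: l => [//|l IH] hl.
have [hy he] := IH (ltnW hl).
rewrite iota_rcons foldl_cat /= {1 3}/rhoT.
have -> : (1 + l == n.-1) = false by lia.
have [hz ez] := rho_spec (k := l.+1) (ltn0Sn l) hl hy.
by rewrite ez.
Qed.

Lemma Rtri_spec n x : (3 <= n)%N -> tri_pos n x ->
  tri_pos n (Rtri n x) /\ mixed_energy n n.-1 (Rtri n x) = mixed_energy n 0 x.
Proof.
case: n => [|[|m]] //= hm hx.
have [hy he] := @foldl_rho_spec m.+2 x m (leqnn _) hx.
have [hz ez] := rho_last_spec hm hy.
rewrite /Rtri iota_rcons foldl_cat /= {1 3}/rhoT eqxx.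
by rewrite ez.
Qed.

Lemma energy_eq_rows N x y : (2 <= N)%N ->
  (forall i j, (i <= N)%N -> x i j = y i j) -> energy N x = energy N y.
Proof.
move=> hN exy; rewrite /energy !exy //; congr (_ + _).
apply: eq_big_nat => i /andP[_ hi]; apply: eq_big_nat => j _.
by rewrite !exy //; lia.
Qed.

Lemma Ttri_spec m w : tri_pos m.+2 w ->
  tri_pos m.+2 (Ttri m.+2 w) /\
  energy m.+2 (Ttri m.+2 w) = \sum_(2 <= i < m.+3) \sum_(1 <= j < i) 1 / w i j.
Proof.
elim: m => [|m IH] hw.
  by split=> //; rewrite /energy /= !big_nat1 /= !addr0 mul0r addr0.
have [hT eT] := IH (fun i j hj hji hi => hw i j hj hji (leqW hi)).
pose y i j := if i == m.+3 then w i j else Ttri m.+2 w i j.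
have hy : tri_pos m.+3 y.
  move=> i j hj hji hi; rewrite /y; case: eqP => [_|ne]; first exact: hw.
  by apply: hT; lia.
have [hR eR] := @Rtri_spec m.+3 y isT hy.
split => //; rewrite energy_mixed // eR mixed_energy0 //=.
rewrite (@energy_eq_rows _ y (Ttri m.+2 w)) //; last first.
  by move=> i j hi; rewrite /y (_ : (i == m.+3) = false) //; lia.
rewrite eT [in RHS]big_nat_recr //=; congr (_ + _).
by apply: eq_big_nat => j _; rewrite /y eqxx.
Qed.
End MixedEnergy.

Theorem theorem6p1 (R : realType) (n : nat) (w : tarray R) :
  (2 <= n)%N ->
  (forall i j : nat, (1 <= j)%N -> (j < i)%N -> (i <= n)%N -> 0 < w i j) ->
  energy n (Ttri n w) = \sum_(2 <= i < n.+1) \sum_(1 <= j < i) 1 / w i j.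
Proof.
case: n => [|[|m]] // _ hw.
by have [_ ->] := Ttri_spec hw.
Qed.
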